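(* Assume $\|F\|<\frac{c_1}{2\sqrt{c_2c_3}}$. Then for every $\varepsilon\in(0,\varepsilon_0]$ the set $\mathbb D_\varepsilon$ is invariant for $S(t)$, i.e. $S(t)\mathbb D_\varepsilon\subset\mathbb D_\varepsilon$ for all $t\ge0$.
   Context: Let $\mathfrak I=(a,b)\subset\mathbb R$ be a bounded interval, $\mathcal H=L^2(\mathfrak I)$ with inner product $\langle\cdot,\cdot\rangle$ and norm $\|\cdot\|$. Let $A=-\partial_{xx}$ with domain $H^2(\mathfrak I)\cap H^1_0(\mathfrak I)$, $\lambda_1>0$ its first eigenvalue, $\mathcal H^r=D(A^{r/2})$, $\|u\|_r=\|A^{r/2}u\|$, $B=I+A$, and on $\mathcal H^r$ the inner product $(u,v)_r=\langle A^{(r-1)/2}B^{1/2}u,A^{(r-1)/2}B^{1/2}v\rangle$ with norm $|||u|||_r^2=\|u\|_{r-1}^2+\|u\|_r^2$. Set $\omega=\sqrt{(1+\lambda_1)/\lambda_1}$. Let $\mu:(0,\infty)\to[0,\infty)$, $\mu\not\equiv0$, nonincreasing, absolutely continuous, with $\kappa:=\int_0^\infty\mu(s)\,ds\in(0,\infty)$, $\int_0^\infty s\mu(s)\,ds=1$, $\lim_{s\to0^+}\mu(s)<\infty$, and $\mu'+\delta\mu\le0$ a.e. for some $\delta>0$. $\mathcal M=L^2_\mu(\mathbb R^+;\mathcal H^1)$ with norm $\|\eta\|_{\mathcal M}^2=\int_0^\infty\mu(s)\|\eta(s)\|_1^2ds$; $\mathbf H=\mathcal H^1\times\mathcal M$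 with $\|(u,\eta)\|_{\mathbf H}^2=|||u|||_1^2+\|\eta\|_{\mathcal M}^2$. $T\eta=-\partial_s\eta$ with domain $\{\eta\in\mathcal M:\partial_s\eta\in\mathcal M,\ \lim_{s\to0}\|\eta(s)\|_1=0\}$. For $f\in L^2(\mathfrak I)$, $S(t)$ is the strongly continuous semigroup on $\mathbf H$ generated by $Bu_t+u_x+\int_0^\infty\mu(s)A\eta(s)\,ds+uu_x=f$, $\eta_t=T\eta+u$ (Dirichlet conditions on $u$), $S(t)z=(u(t),\eta^t)$. Let $F(x)=\int_a^xf(y)\,dy$ and for $\varepsilon>0$, $z=(u,\eta)\in\mathbf H$, $$\Lambda_\varepsilon(z)=\|z\|_{\mathbf H}^2+\frac2\kappa\int_0^\infty\mu(s)\langle F,\eta_x(s)\rangle\,ds+\frac2\kappa\|F\|^2-\frac{\varepsilon}{\sqrt\kappa}\int_0^\infty\mu(s)(u,\eta(s))_1\,ds.$$ Let $c_1,c_2,c_3>0$ and $\varepsilon_0\in(0,\frac1{2\omega})$ be constants depending only on $\mathfrak I,\mu$ such that for every $z\in\mathbf H$ and $\varepsilon\in(0,\varepsilon_0]$, $\mathcal L_\varepsilon(t)=\Lambda_\varepsilon(S(t)z)$ satisfies $\mathcal L_\varepsilon'+\varepsilon c_1\mathcal L_\varepsilon\le c_2\|F\|^2+c_3\varepsilon^2\mathcal L_\varepsilon^2$ for all $t\ge0$. Set $c_*=\sqrt{c_2/c_3}\,\big(\frac{c_1}{\sqrt{c_2c_3}}-\|F\|\big)$ and, for $\varepsilon\in(0,\varepsilon_0]$,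 $\mathbb D_\varepsilon=\{z\in\mathbf H:\Lambda_\varepsilon(z)\le c_*/\varepsilon\}$. *)

From Stdlib Require Import Reals Lra.
From Coquelicot Require Import Coquelicot.
Open Scope R_scope.

Definition omega_const (lambda1 : R) : R := sqrt ((1 + lambda1) / lambda1).

Definition c_star (c1 c2 c3 normF : R) : R :=
  sqrt (c2 / c3) * (c1 / sqrt (c2 * c3) - normF).

Definition D_eps {H : Type} (Lambda : R -> H -> R) (c1 c2 c3 normF eps : R)
  (z : H) : Prop :=
  Lambda eps z <= c_star c1 c2 c3 normF / eps.

(** The level set {Λ_ε ≤ c_*/ε} is a barrier for the differential inequality
    L' + ε c₁ L ≤ c₂‖F‖² + c₃ ε² L².  The smallness of ‖F‖ makes c_* a point
    where c₃x² − c₁x + c₂‖F‖² ≤ 0, so at the level M = c_*/ε the right-hand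
    side minus ε c₁ L is nonpositive, and just above M it is at most
    K (L − M).  If L ever exceeded M, then right after the last time t₁ at
    which L ≤ M the function (L − M) e^{−K s} would be positive yet
    nonincreasing, while it tends to a nonpositive value as s ↓ t₁. *)

From Stdlib Require Import Reals Lra.
From Coquelicot Require Import Coquelicot.
Open Scope R_scope.

Lemma ball_R (x y e : R) : ball x e y <-> Rabs (y - x) < e.
Proof. reflexivity. Qed.

Lemma sqrt_mul_div_sqr (a b : R) :
  0 <= a -> 0 < b -> sqrt (a * b) = sqrt (a / b) * b.
Proof.
  intros Ha Hb.
  replace (a * b) with (a / b * (b * b)) by (field; lra).
  rewrite sqrt_mult_alt by (apply Rdiv_le_0_compat; lra).
  now rewrite sqrt_square by lra.
Qed.

Section CStar.

Variables c1 c2 c3 F : R.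
Hypotheses (Hc2 : 0 < c2) (Hc3 : 0 < c3) (HF0 : 0 <= F).
Hypothesis HF : F < c1 / (2 * sqrt (c2 * c3)).

Let r := sqrt (c2 / c3).

Let r_pos : 0 < r.
Proof. apply sqrt_lt_R0, Rdiv_lt_0_compat; lra. Qed.

Let c2_eq : c2 = r * r * c3.
Proof.
  unfold r; rewrite sqrt_sqrt by (apply Rdiv_le_0_compat; lra).
  field; lra.
Qed.

Let c_star_eq : c_star c1 c2 c3 F = c1 / c3 - r * F.
Proof.
  unfold c_star; fold r; rewrite sqrt_mul_div_sqr by lra; fold r.
  field; split; lra.
Qed.

Let small_F : 2 * r * c3 * F < c1.
Proof.
  rewrite sqrt_mul_div_sqr in HF by lra; fold r in HF.
  apply (Rmult_lt_compat_r (2 * (r * c3))) in HF; [|nra].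
  replace (c1 / (2 * (r * c3)) * (2 * (r * c3))) with c1 in HF by (field; lra).
  lra.
Qed.

Lemma c_star_pos : 0 < c_star c1 c2 c3 F.
Proof.
  rewrite c_star_eq.
  assert (c1 / c3 * c3 = c1) by (field; lra).
  assert (2 * r * F < c1 / c3) by nra.
  nra.
Qed.

Lemma c_star_quadratic_nonpos :
  c2 * F ^ 2 + c3 * c_star c1 c2 c3 F ^ 2 - c1 * c_star c1 c2 c3 F <= 0.
Proof.
  rewrite c_star_eq, c2_eq.
  replace (r * r * c3 * F ^ 2 + c3 * (c1 / c3 - r * F) ^ 2 - c1 * (c1 / c3 - r * F))
    with (r * F * (2 * r * c3 * F - c1)) by (field; lra).
  assert (0 <= r * F) by nra.
  nra.
Qed.

End CStar.

Lemma quadratic_le_secant (A B C M x : R) :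
  0 <= A -> 0 <= B -> 0 <= M -> C + A * M ^ 2 - B * M <= 0 -> M <= x <= M + 1 ->
  C + A * x ^ 2 - B * x <= A * (2 * M + 1) * (x - M).
Proof.
  intros HA HB HM HqM Hx.
  replace (C + A * x ^ 2 - B * x)
    with (C + A * M ^ 2 - B * M + (x - M) * (A * (x + M) - B)) by ring.
  assert ((x - M) * (A * (x + M)) <= (x - M) * (A * (2 * M + 1)))
    by (apply Rmult_le_compat_l, Rmult_le_compat_l; lra).
  assert (0 <= (x - M) * B) by (apply Rmult_le_pos; lra).
  lra.
Qed.

Lemma Derive_nonpos_nonincreasing (f : R -> R) (a b : R) :
  a <= b -> (forall x, a <= x <= b -> ex_derive f x /\ Derive f x <= 0) ->
  f b <= f a.
Proof.
  intros Hab Hf.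
  destruct (MVT_gen f a b (Derive f)) as [c [Hc Hmvt]];
    rewrite ?Rmin_left, ?Rmax_right in * by lra.
  - intros x Hx; apply Derive_correct, Hf; lra.
  - intros x Hx; apply continuity_pt_filterlim, (ex_derive_continuous f), Hf; lra.
  - assert (Derive f c * (b - a) <= 0)
      by (apply Rmult_le_0_r; [apply Hf|]; lra).
    lra.
Qed.

Lemma exp_weighted_excess_nonincreasing (L : R -> R) (M K a b : R) :
  a <= b ->
  (forall x, a <= x <= b -> ex_derive L x /\ Derive L x <= K * (L x - M)) ->
  (L b - M) * exp (- K * b) <= (L a - M) * exp (- K * a).
Proof.
  intros Hab HL.
  apply (Derive_nonpos_nonincreasing (fun s => (L s - M) * exp (- K * s))); auto.
  intros x Hx; destruct (HL x Hx) as [Hex Hle].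
  assert (Hd : is_derive (fun s => (L s - M) * exp (- K * s)) x
                 ((Derive L x - K * (L x - M)) * exp (- K * x))).
  { auto_derive; [exact Hex|].
    change (Derive (fun s => L s) x) with (Derive L x); ring. }
  split; [now exists ((Derive L x - K * (L x - M)) * exp (- K * x))|].
  erewrite is_derive_unique by exact Hd.
  apply Rmult_le_0_r; [lra|apply Rlt_le, exp_pos].
Qed.

Lemma exp_neg_mul_le_1 (K a : R) : 0 <= K -> 0 <= a -> exp (- K * a) <= 1.
Proof.
  intros HK Ha; rewrite <- exp_0.
  destruct (Req_dec (K * a) 0) as [h|h].
  - replace (- K * a) with 0 by lra; lra.
  - apply Rlt_le, exp_increasing; nra.
Qed.

Lemma continuous_at_right (f : R -> R) (x : R) :
  continuous f x -> filterlim f (at_right x) (locally (f x)).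
Proof. apply filterlim_filter_le_1, filter_le_within. Qed.

Lemma at_right_interval (x : R) (P : R -> Prop) :
  at_right x P -> exists b, x < b /\ forall s, x < s <= b -> P s.
Proof.
  intros [d Hd].
  exists (x + d / 2); split; [pose proof (cond_pos d); lra|].
  intros s Hs; apply Hd; [apply ball_R; rewrite Rabs_right|]; pose proof (cond_pos d); lra.
Qed.

Lemma last_time_below (L : R -> R) (M t : R) :
  0 <= t -> (forall s, 0 < s <= t -> continuous L s) -> L 0 <= M -> M < L t ->
  exists t1, 0 <= t1 < t /\ L t1 <= M /\ forall s, t1 < s <= t -> M < L s.
Proof.
  intros Ht HL HL0 HLt.
  set (below := fun s => 0 <= s <= t /\ L s <= M).
  destruct (completeness below) as [t1 [Hub Hlub]].
  { exists t; intros s Hs; apply Hs. }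
  { exists 0; split; [lra|exact HL0]. }
  assert (Ht1 : 0 <= t1 <= t).
  { split; [apply Hub; split; [lra|exact HL0]|apply Hlub; intros s Hs; apply Hs]. }
  assert (Hafter : forall s, t1 < s <= t -> M < L s).
  { intros s Hs; destruct (Rle_or_lt (L s) M) as [h|h]; [|exact h].
    assert (s <= t1) by (apply Hub; split; [lra|exact h]); lra. }
  assert (HLt1 : L t1 <= M).
  { destruct (Rle_or_lt (L t1) M) as [h|h]; [exact h|exfalso].
    destruct (Req_dec t1 0) as [->|Ht1pos]; [lra|].
    destruct (HL t1 ltac:(lra) _ (open_gt M (L t1) h)) as [d Hd].
    assert (t1 <= t1 - d / 2); [|pose proof (cond_pos d); lra].
    apply Hlub; intros s [Hs HLs].
    assert (s <= t1) by (apply Hub; split; assumption).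
    destruct (Rle_or_lt s (t1 - d / 2)) as [h2|h2]; [exact h2|exfalso].
    assert (M < L s); [|lra].
    apply Hd, ball_R; rewrite Rabs_left1; pose proof (cond_pos d); lra. }
  exists t1; repeat split; try tauto.
  destruct (Req_dec t1 t) as [->|]; lra.
Qed.

Lemma below_barrier_forever (L : R -> R) (M K delta : R) :
  0 <= K -> 0 < delta ->
  filterlim L (at_right 0) (locally (L 0)) ->
  (forall t, 0 < t ->
     ex_derive L t /\ (M < L t < M + delta -> Derive L t <= K * (L t - M))) ->
  L 0 <= M -> forall t, 0 <= t -> L t <= M.
Proof.
  intros HK Hdelta HL0cont HLder HL0 t Ht.
  destruct (Rle_or_lt (L t) M) as [|HLt]; [assumption|exfalso].
  assert (Hcont : forall s, 0 < s -> continuous L s)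
    by (intros s Hs; apply (ex_derive_continuous L), HLder, Hs).
  destruct (last_time_below L M t Ht (fun s Hs => Hcont s (proj1 Hs)) HL0 HLt)
    as [t1 [Ht1 [HLt1 Hafter]]].
  assert (Hright : filterlim L (at_right t1) (locally (L t1))).
  { destruct (Req_dec t1 0) as [->|]; [exact HL0cont|].
    apply continuous_at_right, Hcont; lra. }
  assert (Hnear : forall P, locally t1 P -> at_right t1 P)
    by (intros P; apply filter_le_within).
  destruct (at_right_interval t1 (fun s => L s < M + delta /\ s < t))
    as [b [Htb Hb]].
  { apply filter_and; [apply (Hright (fun y => y < M + delta)), open_lt; lra|].
    apply Hnear, open_lt; lra. }
  set (phi := fun s => (L s - M) * exp (- K * s)).
  assert (Hphib : 0 < phi b).
  { apply Rmult_lt_0_compat; [|apply exp_pos].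
    assert (M < L b) by (apply Hafter; split; [|apply Rlt_le, Hb]; lra); lra. }
  destruct (filter_ex (F := at_right t1)
              (fun s => L s < M + phi b /\ t1 < s /\ s < b)) as [a [HLa [Hta Hab]]].
  { repeat apply filter_and.
    - apply (Hright (fun y => y < M + phi b)), open_lt; lra.
    - now exists (mkposreal 1 Rlt_0_1).
    - apply Hnear, open_lt; lra. }
  assert (Hmono : phi b <= phi a).
  { apply exp_weighted_excess_nonincreasing; [lra|].
    intros x Hx; destruct (Hb x ltac:(lra)) as [HLx Hxt].
    destruct (HLder x ltac:(lra)) as [Hex Hbound].
    split; [exact Hex|apply Hbound].
    split; [apply Hafter|]; lra. }
  assert (Hphia : phi a <= L a - M).
  { assert (M < L a) by (apply Hafter; split; [|apply Rlt_le, Hb]; lra).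
    pose proof (exp_neg_mul_le_1 K a HK ltac:(lra)).
    unfold phi; nra. }
  lra.
Qed.

Theorem proposition8p4
  (H : Type) (S : R -> H -> H) (Lambda : R -> H -> R)
  (lambda1 c1 c2 c3 eps0 normF : R)
  (Hlambda1 : 0 < lambda1)
  (Hc1 : 0 < c1) (Hc2 : 0 < c2) (Hc3 : 0 < c3)
  (Heps0 : 0 < eps0 < 1 / (2 * omega_const lambda1))
  (HnormF : 0 <= normF)
  (HS0 : forall z, S 0 z = z)
  (HSsemi : forall t s z, 0 <= t -> 0 <= s -> S (t + s) z = S t (S s z))
  (* L_eps(t) = Lambda_eps(S(t)z) is right-continuous at 0 ... *)
  (Hcont0 : forall eps z, 0 < eps <= eps0 ->
     filterlim (fun t => Lambda eps (S t z)) (at_right 0) (locally (Lambda eps z)))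
  (* ... and differentiable for t > 0 with the differential inequality *)
  (Hdiff : forall eps z t, 0 < eps <= eps0 -> 0 < t ->
     exists d, is_derive (fun s => Lambda eps (S s z)) t d /\
       d + eps * c1 * Lambda eps (S t z)
         <= c2 * normF ^ 2 + c3 * eps ^ 2 * (Lambda eps (S t z)) ^ 2)
  (HF : normF < c1 / (2 * sqrt (c2 * c3))) :
  forall eps, 0 < eps <= eps0 ->
  forall t, 0 <= t ->
  forall z, D_eps Lambda c1 c2 c3 normF eps z ->
            D_eps Lambda c1 c2 c3 normF eps (S t z).
Proof.
  intros eps Heps t Ht z Hz; unfold D_eps in *.
  pose proof (c_star_pos c1 c2 c3 normF Hc2 Hc3 HnormF HF) as Hcs.
  pose proof (c_star_quadratic_nonpos c1 c2 c3 normF Hc2 Hc3 HnormF HF) as Hq.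
  set (cs := c_star c1 c2 c3 normF) in *.
  set (M := cs / eps).
  assert (HM : 0 <= M) by (apply Rdiv_le_0_compat; lra).
  assert (HqM : c2 * normF ^ 2 + c3 * eps ^ 2 * M ^ 2 - eps * c1 * M <= 0).
  { replace (c2 * normF ^ 2 + c3 * eps ^ 2 * M ^ 2 - eps * c1 * M)
      with (c2 * normF ^ 2 + c3 * cs ^ 2 - c1 * cs) by (unfold M; field; lra).
    exact Hq. }
  apply (below_barrier_forever (fun s => Lambda eps (S s z))
           M (c3 * eps ^ 2 * (2 * M + 1)) 1); try lra.
  - assert (0 <= c3 * eps ^ 2) by (apply Rmult_le_pos; [lra|apply pow2_ge_0]); nra.
  - rewrite HS0; exact (Hcont0 eps z Heps).
  - intros s Hs; destruct (Hdiff eps z s Heps Hs) as [d [Hd Hineq]].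
    split; [now exists d|intros HLs].
    erewrite is_derive_unique by exact Hd.
    pose proof (quadratic_le_secant (c3 * eps ^ 2) (eps * c1) (c2 * normF ^ 2)
                  M (Lambda eps (S s z))) as Hsec.
    assert (0 <= c3 * eps ^ 2) by (apply Rmult_le_pos; [lra|apply pow2_ge_0]).
    assert (0 <= eps * c1) by nra.
    specialize (Hsec ltac:(lra) ltac:(lra) HM HqM ltac:(lra)); lra.
  - rewrite HS0; exact Hz.
Qed.
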